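(* Let $G$ be a commutative group, $H$ a subgroup, $G'=G/H$ and $\varphi:G\to G'$ the natural homomorphism. Let $U\subset G$ be a nonempty finite set, $V=\varphi(U)$, and $1<p<\infty$. Then \[ \beta_p(U)\ge\beta_p(V)\min_{x\in V}\beta_p\bigl(U\cap\varphi^{-1}(x)\bigr), \] where $\beta_p(V)$ is computed in $G'$ and the other quantities in $G$.
   Context: For a finite set $U$ in a commutative group $K$ and $1<p<\infty$, $\beta_p(U)=\inf_{A,B}\frac{|A+B+U|}{|A|^{1/p}|B|^{1-1/p}}$, the infimum over all nonempty finite $A,B\subset K$. *)

From HB Require Import structures.
From mathcomp Require Import all_boot all_order all_algebra.
From mathcomp Require Import finmap.
From mathcomp Require Import classical_sets boolp reals exp.
Set Implicit Arguments. Unset Strict Implicit. Unset Printing Implicit Defensive.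
Import Order.TTheory GRing.Theory Num.Theory.
Local Open Scope ring_scope.
Local Open Scope classical_set_scope.
Local Open Scope fset_scope.

Definition sumset (G : zmodType) (A B : {fset G}) : {fset G} :=
  [fset (a + b)%R | a in A, b in B].

Definition beta_ratio (R : realType) (G : zmodType) (p : R) (U A B : {fset G}) : R :=
  (#|` sumset (sumset A B) U|%:R) /
    ((#|` A|%:R `^ p^-1) * (#|` B|%:R `^ (1 - p^-1))).

Definition beta (R : realType) (G : zmodType) (p : R) (U : {fset G}) : R :=
  inf [set r : R | exists A B : {fset G},
         [/\ A != fset0, B != fset0 & r = beta_ratio p U A B]].

Definition fimage (G G' : zmodType) (phi : G -> G') (U : {fset G}) : {fset G'} :=
  [fset phi u | u in U].
Definition fibre (G G' : zmodType) (phi : G -> G') (U : {fset G}) (x : G') : {fset G} :=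
  [fset u in U | phi u == x].

(* min over x in V of beta_p(U ∩ phi^{-1}(x)); V finite nonempty, so this
   infimum of a finite nonempty set of reals is its minimum. *)
Definition min_fibre_beta (R : realType) (G G' : zmodType) (p : R)
    (phi : G -> G') (U : {fset G}) : R :=
  inf [set beta p (fibre phi U x) | x in [set x | x \in fimage phi U]].

From HB Require Import structures.
From mathcomp Require Import all_boot all_order all_algebra.
From mathcomp Require Import finmap.
From mathcomp Require Import classical_sets boolp reals exp.
From mathcomp Require Import ring lra zify.
Import Order.TTheory GRing.Theory Num.Theory.
Local Open Scope ring_scope.

(* Put s = 1/p, t = 1 - 1/p, V = phi(U) and m = min_(x in V) beta_p(U_x), where
   U_x = U ∩ phi^-1(x).  For nonempty A, B all of whose fibres over phi(A),
   phi(B) have at least a, b elements, one shows by induction on |A| + |B| that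
     m (beta_p(V) |A|^s |B|^t
        + (|phi(A) + phi(B) + V| - beta_p(V) |phi(A)|^s |phi(B)|^t) a^s b^t)
       <= |A + B + U|;
   for a = b = 0 this is the theorem.  The fibre of A + B + U over y + z + x
   contains A_y + B_z + U_x, so it has at least m a^s b^t elements.  In the
   inductive step one deletes a smallest fibre of A if
   |phi(A)| a |B| <= |phi(B)| b |A| (a and b now being the smallest fibre
   sizes), and symmetrically of B otherwise: the points of phi(A) + phi(B) + V
   that disappear are paid for by such full fibres, and the concavity of
   u |-> u^s bounds what is lost in |A|^s |B|^t. *)

Section PowR.
Context {R : realType}.

Lemma ler_powR2 {r x y : R} : 0 <= r -> 0 <= x -> x <= y -> x `^ r <= y `^ r.
Proof. by move=> r0 x0 xy; apply: ge0_ler_powR; rewrite ?nnegrE // (le_trans x0). Qed.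

Lemma powR_split {s t x : R} : s + t = 1 -> 0 <= x -> x `^ s * x `^ t = x.
Proof.
move=> st x0; have [->|xn0] := eqVneq x 0.
  have [s0|s0] := eqVneq s 0; last by rewrite powR0 // mul0r.
  have -> : t = 1 by rewrite -st s0 add0r.
  by rewrite s0 powRr0 powRr1 // mul1r.
by rewrite -powRD ?st ?powRr1 //; apply/implyP.
Qed.

Lemma powR_weighted_amgm {s x y : R} : 0 < s -> s < 1 -> 0 <= x -> 0 <= y ->
  x `^ s * y `^ (1 - s) <= s * x + (1 - s) * y.
Proof.
move=> s0 s1 x0 y0; have s'0 : 0 < 1 - s by lra.
have := @conjugate_powR R (x `^ s) (y `^ (1 - s)) s^-1 (1 - s)^-1
  (powR_ge0 _ _) (powR_ge0 _ _) ltac:(by rewrite invr_gt0) ltac:(by rewrite invr_gt0).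
rewrite -!powRrM !mulfV ?gt_eqF // !powRr1 // !invrK (mulrC x) (mulrC y).
by apply; lra.
Qed.

Lemma powR_concave {s l x y : R} : 0 < s -> s < 1 -> 0 <= l <= 1 ->
  0 <= x -> 0 <= y ->
  l * x `^ s + (1 - l) * y `^ s <= (l * x + (1 - l) * y) `^ s.
Proof.
move=> s0 s1 /andP[l0 l1] x0 y0; set z := l * x + (1 - l) * y.
have lx0 : 0 <= l * x by rewrite mulr_ge0.
have ly0 : 0 <= (1 - l) * y by rewrite mulr_ge0 // subr_ge0.
have [z0|zn0] := eqVneq z 0.
  have mul_powR_eq0 c u : c * u == 0 -> c * u `^ s = 0.
    by rewrite mulf_eq0 => /orP[]/eqP->; rewrite ?mul0r ?powR0 ?gt_eqF ?mulr0.
  move/eqP: (z0); rewrite paddr_eq0 // => /andP[/mul_powR_eq0-> /mul_powR_eq0->].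
  by rewrite z0 powR0 ?gt_eqF // addr0.
have z_gt0 : 0 < z by rewrite lt_neqAle eq_sym zn0 addr_ge0.
(* Multiply by z^(1-s) and add the AM-GM bounds for x^s z^(1-s) and y^s z^(1-s). *)
have hx := powR_weighted_amgm s0 s1 x0 (ltW z_gt0).
have hy := powR_weighted_amgm s0 s1 y0 (ltW z_gt0).
have zs : z `^ s * z `^ (1 - s) = z by rewrite powR_split ?(ltW z_gt0) // addrC subrK.
rewrite -(ler_pM2r (powR_gt0 (1 - s) z_gt0)) zs mulrDl -!mulrA.
have ez : z = l * (s * x + (1 - s) * z) + (1 - l) * (s * y + (1 - s) * z).
  by rewrite /z; ring.
rewrite [X in _ <= X]ez.
by apply: lerD; apply: ler_wpM2l => //; rewrite subr_ge0.
Qed.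

Lemma powR_secant {s y a d : R} : 0 < s -> s < 1 -> 0 <= a <= d -> d <= y -> 0 < d ->
  d * (y `^ s - (y - a) `^ s) <= a * (y `^ s - (y - d) `^ s).
Proof.
move=> s0 s1 /andP[a0 ad] dy d0; set u := a / d.
have du : d * u = a by rewrite /u mulrCA divff ?mulr1 ?gt_eqF.
have u01 : 0 <= u <= 1 by rewrite /u divr_ge0 ?ler_pdivrMr ?mul1r ?(ltW d0).
have := powR_concave s0 s1 u01 (_ : 0 <= y - d) (_ : 0 <= y); rewrite subr_ge0.
have -> : u * (y - d) + (1 - u) * y = y - a by rewrite -du; ring.
move=> /(_ dy (le_trans (ltW d0) dy)) /(ler_wpM2l (ltW d0)).
rewrite mulrDr mulrA du mulrA mulrBr mulr1 du; lra.
Qed.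

Lemma powR_removal_le {s t X Y a b k l : R} : 0 < s -> 0 < t -> s + t = 1 ->
  0 < a -> 1 <= k -> k * a <= X -> 0 <= Y -> 0 <= b -> 0 <= l ->
  k * a * Y <= l * b * X ->
  X `^ s * Y `^ t <=
    (X - a) `^ s * Y `^ t + (k `^ s - (k - 1) `^ s) * l `^ t * (a `^ s * b `^ t).
Proof.
move=> s0 t0 st a0 k1 kaX Y0 b0 l0 kaY.
have s1 : s < 1 by lra.
have k0 : 0 < k by lra.
(* Compare with the secant of u |-> u^s over [X - X/k, X]. *)
set c := X / k.
have Xc : X = k * c by rewrite /c mulrCA divff ?mulr1 ?gt_eqF.
have c0 : 0 < c by rewrite /c divr_gt0 //; nra.
have ac : a <= c by rewrite /c ler_pdivlMr // mulrC.
clearbody c; subst X.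
have D0 : 0 <= k `^ s - (k - 1) `^ s by rewrite subr_ge0 ler_powR2 ?(ltW s0); lra.
have secant :
    c * ((k * c) `^ s - (k * c - a) `^ s) <= a * c `^ s * (k `^ s - (k - 1) `^ s).
  have := powR_secant s0 s1 (_ : 0 <= a <= c) (_ : c <= k * c) c0.
  rewrite (ltW a0) ac => /(_ isT ltac:(nra)).
  rewrite (_ : k * c - c = (k - 1) * c); last by ring.
  by rewrite !powRM ?(ltW c0) ?(ltW k0) ?subr_ge0 //; lra.
have key : a * c `^ s * Y `^ t <= c * (l `^ t * (a `^ s * b `^ t)).
  rewrite -{1}(powR_split st (ltW a0)) -{2}(powR_split st (ltW c0)).
  have : (a * Y) `^ t <= (c * (l * b)) `^ t.
    by apply: ler_powR2; rewrite ?(ltW t0) ?mulr_ge0 ?(ltW a0) //; nra.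
  rewrite !powRM ?mulr_ge0 ?(ltW a0) ?(ltW c0) // => aY_le.
  have := ler_wpM2l (mulr_ge0 (powR_ge0 a s) (powR_ge0 c s)) aY_le; lra.
rewrite -(ler_pM2l c0).
have := ler_wpM2r (powR_ge0 Y t) secant; have := ler_wpM2l D0 key; lra.
Qed.

End PowR.

Local Open Scope fset_scope.

Section Sumset.
Context {G : zmodType}.
Implicit Types A B : {fset G}.

Lemma sumsetP A B x :
  reflect (exists a b, [/\ a \in A, b \in B & x = (a + b)%R]) (x \in sumset A B).
Proof.
apply: (iffP (imfset2P _ _ _ _ _)) => [[a aA [b bB ->]]|[a [b [aA bB ->]]]].
  by exists a, b.
by exists a => //; exists b.
Qed.

Lemma mem_sumset A B a b : a \in A -> b \in B -> (a + b)%R \in sumset A B.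
Proof. by move=> aA bB; apply/sumsetP; exists a, b. Qed.

Lemma sumsetS {A A' B B'} : A `<=` A' -> B `<=` B' -> sumset A B `<=` sumset A' B'.
Proof.
move=> /fsubsetP sA /fsubsetP sB; apply/fsubsetP => _ /sumsetP[a [b [aA bB ->]]].
by rewrite mem_sumset ?sA ?sB.
Qed.

Lemma sumsetC A B : sumset A B = sumset B A.
Proof.
by apply/fsetP => x; apply/sumsetP/sumsetP => -[a [b [aA bB ->]]];
  exists b, a; rewrite addrC.
Qed.

End Sumset.

Section Fibre.
Context {G G' : zmodType} (phi : G -> G').
Implicit Types (A C : {fset G}) (W : {fset G'}).

Lemma fibreE A y x : (x \in fibre phi A y) = (x \in A) && (phi x == y).
Proof. by rewrite !inE. Qed.

Lemma fibre_sub A y : fibre phi A y `<=` A.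
Proof. by apply/fsubsetP => x; rewrite fibreE => /andP[]. Qed.

Lemma fibreS {A C} y : A `<=` C -> fibre phi A y `<=` fibre phi C y.
Proof.
by move=> /fsubsetP sAC; apply/fsubsetP => x; rewrite !fibreE => /andP[/sAC-> ->].
Qed.

Lemma fimageP A y : reflect (exists2 x, x \in A & y = phi x) (y \in fimage phi A).
Proof. exact: (iffP (imfsetP _ _ _ _)). Qed.

Lemma mem_fimage {A x} : x \in A -> phi x \in fimage phi A.
Proof. by move=> xA; apply/fimageP; exists x. Qed.

Lemma fimageS {A C} : A `<=` C -> fimage phi A `<=` fimage phi C.
Proof.
by move=> /fsubsetP sAC; apply/fsubsetP => _ /fimageP[x xA ->]; rewrite mem_fimage ?sAC.
Qed.

Lemma fibre_neq0 {A y} : y \in fimage phi A -> fibre phi A y != fset0.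
Proof. by move=> /fimageP[x xA ->]; apply/fset0Pn; exists x; rewrite fibreE xA eqxx. Qed.

Lemma fimage_neq0 A : (fimage phi A != fset0) = (A != fset0).
Proof.
apply/fset0Pn/fset0Pn => [[_ /fimageP[x xA _]]|[x xA]]; first by exists x.
by exists (phi x); apply: mem_fimage.
Qed.

Lemma card_sum_fibres C W : fimage phi C `<=` W ->
  #|` C| = (\sum_(w <- W) #|` fibre phi C w|)%N.
Proof.
move=> /fsubsetP sCW.
have fibre_sum1 w : #|` fibre phi C w| = (\sum_(c <- C | phi c == w) 1)%N.
  by rewrite card_fset_sum1 [RHS]big_fset_condE.
rewrite (eq_bigr _ (fun w _ => fibre_sum1 w)).
rewrite (exchange_big_dep xpredT) //= card_fset_sum1 !big_seq.
apply: eq_bigr => c cC; rewrite big_fset_condE.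
have -> : [fset w in W | phi c == w] = [fset phi c].
  apply/fsetP => w; rewrite !inE /=; apply/andP/eqP => [[_ /eqP ->]|->] //.
  by rewrite sCW ?mem_fimage.
by rewrite big_seq_fset1.
Qed.

Lemma card_fimage_mul_le {A a} :
  (forall y, y \in fimage phi A -> a <= #|` fibre phi A y|)%N ->
  (#|` fimage phi A| * a <= #|` A|)%N.
Proof.
move=> fibre_ge; rewrite (@card_sum_fibres A (fimage phi A)) // card_fset_sum1.
by rewrite big_distrl !big_seq /=; apply: leq_sum => y yA; rewrite mul1n fibre_ge.
Qed.

Lemma card_fibre_fimage1 A y : #|` fimage phi A| = 1%N -> y \in fimage phi A ->
  #|` fibre phi A y| = #|` A|.
Proof.
move=> /eqP/cardfs1P[y1 A1]; rewrite A1 inE => /eqP->.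
by rewrite (@card_sum_fibres A [fset y1]) ?A1 // big_seq_fset1.
Qed.

Lemma fimage_fibreD A y0 : fimage phi (A `\` fibre phi A y0) = fimage phi A `\ y0.
Proof.
apply/fsetP => y; rewrite in_fsetD1; apply/fimageP/andP.
  case=> x; rewrite in_fsetD fibreE => /andP[+ xA] ->; rewrite xA /=.
  by split; last exact: mem_fimage.
case=> yy0 /fimageP[x xA yx]; exists x => //.
by rewrite in_fsetD fibreE xA -yx (negbTE yy0).
Qed.

Lemma fibre_fibreD A y0 y : y != y0 ->
  fibre phi (A `\` fibre phi A y0) y = fibre phi A y.
Proof.
move=> yy0; apply/fsetP => x; rewrite !fibreE in_fsetD fibreE.
by case: (eqVneq (phi x) y) => [->|]; rewrite ?(negbTE yy0) ?andbF ?andbT.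
Qed.

Lemma card_fibreD A y0 :
  #|` A| = (#|` fibre phi A y0| + #|` A `\` fibre phi A y0|)%N.
Proof. by rewrite cardfsDS ?fibre_sub // subnKC // fsubset_leq_card ?fibre_sub. Qed.

Lemma card_fibre_split {R : numDomainType} {C C1} (r : R) : C1 `<=` C ->
  (forall w, w \in fimage phi C -> r <= #|` fibre phi C w|%:R)%R ->
  (#|` C1|%:R + (#|` fimage phi C|%:R - #|` fimage phi C1|%:R) * r <= #|` C|%:R)%R.
Proof.
move=> sC1C fibre_ge; have sW1W := fimageS sC1C.
rewrite (@card_sum_fibres C (fimage phi C)) // natr_sum.
rewrite (big_fsetID _ (mem (fimage phi C1))) /=.
have -> : [fset w in fimage phi C | w \in fimage phi C1] = fimage phi C1.
  by apply/fsetP => w; rewrite !inE /= andb_idl // => /(fsubsetP sW1W).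
have -> : [fset w in fimage phi C | w \notin fimage phi C1] =
          fimage phi C `\` fimage phi C1.
  by apply/fsetP => w; rewrite !inE /= andbC.
apply: lerD.
  rewrite -natr_sum ler_nat (@card_sum_fibres C1 (fimage phi C1)) //.
  by apply: leq_sum => w _; exact/fsubset_leq_card/fibreS.
rewrite -natrB ?fsubset_leq_card // -cardfsDS // card_fset_sum1 natr_sum mulr_suml.
by rewrite !big_seq; apply: ler_sum => w; rewrite in_fsetD mul1r => /andP[_ /fibre_ge].
Qed.

End Fibre.

Lemma fset_argmin {T : choiceType} (f : T -> nat) (X : {fset T}) : X != fset0 ->
  exists2 x, x \in X & forall y, y \in X -> (f x <= f y)%N.
Proof.
case/fset0Pn=> x0 x0X.
have [x _ x_min] := @arg_minnP X [` x0X] xpredT (f \o val) isT.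
by exists (val x) => [|y yX]; [exact: valP | exact: (x_min [` yX])].
Qed.

Lemma fibre_removal_choice {k l a b X Y : nat} :
  (k * a <= X)%N -> (l * b <= Y)%N -> (k = 1 -> X = a)%N -> (l = 1 -> Y = b)%N ->
  (0 < k)%N -> (0 < l)%N ->
  [\/ (k = 1 /\ l = 1)%N, (1 < k /\ k * a * Y <= l * b * X)%N
    | (1 < l /\ l * b * X <= k * a * Y)%N].
Proof.
move=> kX lY Xa Yb k0 l0.
have [k_le1|k_gt1] := leqP k 1; have [l_le1|l_gt1] := leqP l 1.
- by constructor 1; lia.
- by constructor 3; rewrite (Xa _) //; nia.
- by constructor 2; rewrite (Yb _) //; nia.
have [crit|crit] := leqP (k * a * Y) (l * b * X); first by constructor 2.
by constructor 3; split => //; exact: ltnW.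
Qed.

Section AdditiveFibre.
Context {G G' : zmodType} {phi : G -> G'}.
Hypothesis phi_add : forall x y, phi (x + y)%R = (phi x + phi y)%R.
Implicit Types A B : {fset G}.

Lemma fimage_sumset A B :
  fimage phi (sumset A B) = sumset (fimage phi A) (fimage phi B).
Proof.
apply/fsetP => w; apply/fimageP/sumsetP.
  case=> _ /sumsetP[a [b [aA bB ->]]] ->.
  by exists (phi a), (phi b); rewrite phi_add !mem_fimage.
case=> _ [_ [/fimageP[a aA ->] /fimageP[b bB ->] ->]].
by exists (a + b)%R; rewrite ?mem_sumset ?phi_add.
Qed.

Lemma sumset_fibre_sub A B y z :
  sumset (fibre phi A y) (fibre phi B z) `<=` fibre phi (sumset A B) (y + z)%R.
Proof.
apply/fsubsetP => _ /sumsetP[a [b [+ + ->]]].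
rewrite !fibreE => /andP[aA /eqP<-] /andP[bB /eqP<-].
by rewrite mem_sumset // phi_add eqxx.
Qed.

End AdditiveFibre.

Section Beta.
Context {R : realType} {G : zmodType}.
Implicit Types (p s t r : R) (U : {fset G}).

Definition beta_lower_bound s t r U : Prop :=
  forall A B : {fset G}, A != fset0 -> B != fset0 ->
    (r * (#|` A|%:R `^ s * #|` B|%:R `^ t) <= #|` sumset (sumset A B) U|%:R)%R.

Lemma beta_lower_boundC {s t r U} :
  beta_lower_bound s t r U -> beta_lower_bound t s r U.
Proof. by move=> lbU A B A0 B0; rewrite [_ `^ t * _]mulrC (sumsetC A); apply: lbU. Qed.

Lemma beta_lower_boundW {s t r r' U} :
  (r' <= r)%R -> beta_lower_bound s t r U -> beta_lower_bound s t r' U.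
Proof.
move=> r'r lbU A B A0 B0; apply: le_trans (lbU A B A0 B0).
by rewrite ler_wpM2r ?mulr_ge0 ?powR_ge0.
Qed.

Lemma card_powR_gt0 s t (A B : {fset G}) : A != fset0 -> B != fset0 ->
  (0 < #|` A|%:R `^ s * #|` B|%:R `^ t :> R)%R.
Proof. by move=> A0 B0; rewrite mulr_gt0 // powR_gt0 // ltr0n cardfs_gt0. Qed.

Lemma beta_lower_bound_beta p U : beta_lower_bound p^-1 (1 - p^-1) (beta p U) U.
Proof.
move=> A B A0 B0; rewrite -ler_pdivlMr ?card_powR_gt0 //.
apply: ge_inf; last by exists A, B.
by exists 0%R => _ [A' [B' [_ _ ->]]]; rewrite divr_ge0 ?mulr_ge0 ?powR_ge0.
Qed.

Lemma beta_ge p r U : beta_lower_bound p^-1 (1 - p^-1) r U -> (r <= beta p U)%R.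
Proof.
move=> lbU; set O := [fset 0%R : G].
have O0 : O != fset0 by apply/fset0Pn; exists 0%R; rewrite inE.
apply: lb_le_inf => [|_ [A [B [A0 B0 ->]]]]; first by exists (beta_ratio p U O O), O, O.
by rewrite /beta_ratio ler_pdivlMr ?card_powR_gt0 //; apply: lbU.
Qed.

Lemma beta_ge0 p U : (0 <= beta p U)%R.
Proof. by apply: beta_ge => A B _ _; rewrite mul0r. Qed.

Lemma min_fibre_beta_le {G' : zmodType} p (phi : G -> G') U x :
  x \in fimage phi U -> (min_fibre_beta p phi U <= beta p (fibre phi U x))%R.
Proof.
move=> xU; apply: ge_inf; last by exists x.
by exists 0%R => _ [y _ <-]; apply: beta_ge0.
Qed.

Lemma min_fibre_beta_ge0 {G' : zmodType} p (phi : G -> G') U :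
  U != fset0 -> (0 <= min_fibre_beta p phi U)%R.
Proof.
case/fset0Pn=> u uU; apply: lb_le_inf => [|_ [y _ <-]]; last exact: beta_ge0.
by exists (beta p (fibre phi U (phi u))), (phi u) => //; apply: mem_fimage.
Qed.

End Beta.

Section FibredSumsetBound.
Context {R : realType} {G G' : zmodType}.
Variable phi : G -> G'.
Hypothesis phi_add : forall x y, phi (x + y)%R = (phi x + phi y)%R.
Variables (U : {fset G}) (m betaV : R).
Hypotheses (m_ge0 : (0 <= m)%R) (betaV_ge0 : (0 <= betaV)%R).
Implicit Types A B : {fset G}.

Definition fibred_sumset_bound (s t : R) A B (a b : nat) : Prop :=
  (m * (betaV * (#|` A|%:R `^ s * #|` B|%:R `^ t)
        + (#|` fimage phi (sumset (sumset A B) U)|%:R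
           - betaV * (#|` fimage phi A|%:R `^ s * #|` fimage phi B|%:R `^ t))
          * (a%:R `^ s * b%:R `^ t))
   <= #|` sumset (sumset A B) U|%:R)%R.

Lemma fibred_sumset_boundC s t A B a b :
  fibred_sumset_bound s t A B a b = fibred_sumset_bound t s B A b a.
Proof. by rewrite /fibred_sumset_bound (sumsetC B) !(mulrC (_ `^ t)). Qed.

(* Closing this section generalizes its lemmas over s and t, so that they can
   also be used at (t, s) after exchanging A and B. *)
Section Step.
Context {s t : R}.
Hypotheses (s_gt0 : (0 < s)%R) (t_gt0 : (0 < t)%R) (st1 : (s + t = 1)%R).
Hypothesis fibre_lb :
  forall x, x \in fimage phi U -> beta_lower_bound s t m (fibre phi U x).
Hypothesis image_lb : beta_lower_bound s t betaV (fimage phi U).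

Lemma card_fibre_sumset_ge {A B a b} :
  (forall y, y \in fimage phi A -> a <= #|` fibre phi A y|)%N ->
  (forall z, z \in fimage phi B -> b <= #|` fibre phi B z|)%N ->
  forall w, w \in fimage phi (sumset (sumset A B) U) ->
  (m * (a%:R `^ s * b%:R `^ t) <= #|` fibre phi (sumset (sumset A B) U) w|%:R)%R.
Proof.
move=> a_le b_le w /fimageP[_ /sumsetP[_ [u [/sumsetP[x [y [xA yB ->]]] uU ->]]] ->].
set Ax := fibre phi A (phi x); set By := fibre phi B (phi y).
set Uu := fibre phi U (phi u).
have sub :
    sumset (sumset Ax By) Uu `<=` fibre phi (sumset (sumset A B) U) (phi (x + y + u)%R).
  rewrite !phi_add.
  apply: fsubset_trans (sumsetS (sumset_fibre_sub phi_add _ _ _ _) (fsubset_refl _)) _.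
  exact: sumset_fibre_sub.
apply: (@le_trans _ _ #|` sumset (sumset Ax By) Uu|%:R); last first.
  by rewrite ler_nat fsubset_leq_card.
apply: le_trans (fibre_lb _ (mem_fimage phi uU) _ _
  (fibre_neq0 phi (mem_fimage phi xA)) (fibre_neq0 phi (mem_fimage phi yB))).
rewrite ler_wpM2l // ler_pM ?powR_ge0 //; apply: ler_powR2;
  rewrite ?ler0n ?ler_nat ?(ltW s_gt0) ?(ltW t_gt0) //.
  exact: a_le (mem_fimage phi xA).
exact: b_le (mem_fimage phi yB).
Qed.

Lemma fibred_sumset_boundW {A B a b a' b'} : A != fset0 -> B != fset0 ->
  (a' <= a)%N -> (b' <= b)%N ->
  fibred_sumset_bound s t A B a b -> fibred_sumset_bound s t A B a' b'.
Proof.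
move=> A0 B0 a'a b'b; apply: le_trans; rewrite ler_wpM2l // lerD2l ler_wpM2l //.
  by rewrite subr_ge0 !fimage_sumset //; apply: image_lb; rewrite fimage_neq0.
by rewrite ler_pM ?powR_ge0 // ler_powR2 ?ler0n ?ler_nat // ltW.
Qed.

Lemma fibred_sumset_bound1 A B :
  #|` fimage phi A| = 1%N -> #|` fimage phi B| = 1%N ->
  fibred_sumset_bound s t A B #|` A| #|` B|.
Proof.
move=> kA1 kB1; rewrite /fibred_sumset_bound kA1 kB1 !powR1.
have card_le_fibre C : #|` fimage phi C| = 1%N ->
    forall y, y \in fimage phi C -> (#|` C| <= #|` fibre phi C y|)%N.
  by move=> kC1 y yC; rewrite card_fibre_fimage1.
have := card_fibre_split phi _ (fsub0set (sumset (sumset A B) U))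
  (card_fibre_sumset_ge (card_le_fibre _ kA1) (card_le_fibre _ kB1)).
by rewrite [fimage _ fset0]imfset0 !cardfs0; lra.
Qed.

Lemma fibred_sumset_bound_step {A B y0 b} :
  y0 \in fimage phi A -> (1 < #|` fimage phi A|)%N ->
  (forall y, y \in fimage phi A -> #|` fibre phi A y0| <= #|` fibre phi A y|)%N ->
  (forall z, z \in fimage phi B -> b <= #|` fibre phi B z|)%N ->
  (#|` fimage phi A| * #|` fibre phi A y0| * #|` B|
     <= #|` fimage phi B| * b * #|` A|)%N ->
  (forall A', (#|` A'| < #|` A|)%N -> A' != fset0 ->
     (forall y, y \in fimage phi A' -> #|` fibre phi A y0| <= #|` fibre phi A' y|)%N ->
     fibred_sumset_bound s t A' B #|` fibre phi A y0| b) ->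
  fibred_sumset_bound s t A B #|` fibre phi A y0| b.
Proof.
move=> y0A k_gt1 y0_min b_le crit IH.
set a := #|` fibre phi A y0| in y0_min crit IH *.
set A' := A `\` fibre phi A y0.
have a_gt0 : (0 < a)%N by rewrite cardfs_gt0 fibre_neq0.
have cardA : #|` A| = (a + #|` A'|)%N := card_fibreD phi A y0.
have cardA' : #|` fimage phi A| = #|` fimage phi A'|.+1.
  by rewrite fimage_fibreD (cardfsD1 y0) y0A.
have A'0 : A' != fset0 by rewrite -(fimage_neq0 phi) -cardfs_gt0 -ltnS -cardA'.
have A'_min y : y \in fimage phi A' -> (a <= #|` fibre phi A' y|)%N.
  by rewrite fimage_fibreD in_fsetD1 => /andP[yy0 yA]; rewrite fibre_fibreD // y0_min.
have := IH A' ltac:(by rewrite cardA -[X in (X < _)%N]add0n ltn_add2r) A'0 A'_min.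
have sub : sumset (sumset A' B) U `<=` sumset (sumset A B) U.
  exact: sumsetS (sumsetS (fsubsetDl _ _) (fsubset_refl _)) (fsubset_refl _).
have := card_fibre_split phi _ sub (card_fibre_sumset_ge y0_min b_le).
have := @powR_removal_le _ s t #|` A|%:R #|` B|%:R a%:R b%:R
  #|` fimage phi A|%:R #|` fimage phi B|%:R s_gt0 t_gt0 st1.
rewrite ltr0n a_gt0 ler1n ltnW // -natrM ler_nat card_fimage_mul_le //.
rewrite !ler0n -!natrM ler_nat crit.
have -> : (#|` A|%:R - a%:R = #|` A'|%:R :> R)%R by rewrite cardA natrD addrC addKr.
have -> : (#|` fimage phi A|%:R - 1 = #|` fimage phi A'|%:R :> R)%R.
  by rewrite cardA' -natr1 addrK.
move=> /(_ isT isT isT isT isT isT isT) /(ler_wpM2l (mulr_ge0 m_ge0 betaV_ge0)).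
rewrite /fibred_sumset_bound; lra.
Qed.

End Step.

Section Induction.
Context {s t : R}.
Hypotheses (s_gt0 : (0 < s)%R) (t_gt0 : (0 < t)%R) (st1 : (s + t = 1)%R).
Hypothesis fibre_lb :
  forall x, x \in fimage phi U -> beta_lower_bound s t m (fibre phi U x).
Hypothesis image_lb : beta_lower_bound s t betaV (fimage phi U).

Lemma fibred_sumset_bound_ge A B a b : A != fset0 -> B != fset0 ->
  (forall y, y \in fimage phi A -> a <= #|` fibre phi A y|)%N ->
  (forall z, z \in fimage phi B -> b <= #|` fibre phi B z|)%N ->
  fibred_sumset_bound s t A B a b.
Proof.
have [n] := ubnP (#|` A| + #|` B|); elim: n A B a b => // n IH A B a b.
rewrite ltnS => size_le A0 B0 a_le b_le.
have imA0 : fimage phi A != fset0 by rewrite fimage_neq0.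
have imB0 : fimage phi B != fset0 by rewrite fimage_neq0.
have [y0 y0A y0_min] := fset_argmin (fun y => #|` fibre phi A y|) _ imA0.
have [z0 z0B z0_min] := fset_argmin (fun z => #|` fibre phi B z|) _ imB0.
apply: (fibred_sumset_boundW s_gt0 t_gt0 image_lb A0 B0 (a_le _ y0A) (b_le _ z0B)).
have [[kA1 kB1]|[k_gt1 crit]|[l_gt1 crit]] := fibre_removal_choice
  (card_fimage_mul_le phi y0_min) (card_fimage_mul_le phi z0_min)
  (fun kA1 => esym (card_fibre_fimage1 phi A y0 kA1 y0A))
  (fun kB1 => esym (card_fibre_fimage1 phi B z0 kB1 z0B))
  ltac:(by rewrite cardfs_gt0) ltac:(by rewrite cardfs_gt0).
- by rewrite !card_fibre_fimage1 //; apply: fibred_sumset_bound1.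
- apply: (fibred_sumset_bound_step s_gt0 t_gt0 st1 fibre_lb y0A k_gt1 y0_min z0_min crit).
  move=> A' ltA' A'0 A'_min; apply: IH => //.
  by rewrite (leq_trans _ size_le) // ltn_add2r.
have ts1 : (t + s = 1)%R by rewrite addrC.
have fibre_lb' x (xU : x \in fimage phi U) := beta_lower_boundC (fibre_lb x xU).
rewrite fibred_sumset_boundC.
apply: (fibred_sumset_bound_step t_gt0 s_gt0 ts1 fibre_lb' z0B l_gt1 z0_min y0_min crit).
move=> B' ltB' B'0 B'_min; rewrite -fibred_sumset_boundC; apply: IH => //.
by rewrite (leq_trans _ size_le) // ltn_add2l.
Qed.

Lemma beta_lower_bound_quotient : beta_lower_bound s t (betaV * m) U.
Proof.
move=> A B A0 B0.
have := fibred_sumset_bound_ge A B 0 0 A0 B0 (fun _ _ => leq0n _) (fun _ _ => leq0n _).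
by rewrite /fibred_sumset_bound powR0 ?gt_eqF // mul0r mulr0 addr0 mulrA (mulrC m).
Qed.

End Induction.

End FibredSumsetBound.

Theorem mainTheorem8 (R : realType) (G G' : zmodType) (phi : G -> G')
  (phi_add : forall x y : G, (phi (x + y) = phi x + phi y)%R)
  (phi_surj : forall y : G', exists x : G, phi x = y)
  (U : {fset G}) (hU : U != fset0) (p : R) (hp : 1 < p) :
  beta p U >= beta p (fimage phi U) * min_fibre_beta p phi U.
Proof.
have p_gt0 : 0 < p by apply: lt_trans hp.
apply/beta_ge/(beta_lower_bound_quotient phi phi_add U).
- exact: min_fibre_beta_ge0.
- exact: beta_ge0.
- by rewrite invr_gt0.
- by rewrite subr_gt0 invf_lt1.
- by rewrite addrC subrK.
- move=> x xU; apply: beta_lower_boundW (beta_lower_bound_beta _ _).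
  exact: min_fibre_beta_le.
- exact: beta_lower_bound_beta.
Qed.
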